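(* Let $f:A\to B$ be a ring homomorphism and let $\mathfrak b$ be an ideal of $B$. Let $A\bowtie^f\mathfrak b:=\{(a,f(a)+b): a\in A,\ b\in\mathfrak b\}$, a subring of $A\times B$. Assume that $f^{-1}(\mathfrak b)$ is a regular ideal of $A$ and $\mathfrak b$ is a regular ideal of $B$. Then the following are equivalent: (i) $A\bowtie^f\mathfrak b$ is a Prüfer ring; (ii) $A$ and $B$ are Prüfer rings and $\mathfrak b=B$.
   Context: All rings are commutative with identity. An element of a ring is regular if it is not a zerodivisor; an ideal is regular if it contains a regular element. A ring $R$ is a Prüfer ring if every regular finitely generated ideal of $R$ is invertible. *)

From HB Require Import structures.
From mathcomp Require Import all_boot all_order all_algebra.
From mathcomp Require Import ring.
Set Implicit Arguments. Unset Strict Implicit. Unset Printing Implicit Defensive.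
Import Order.TTheory GRing.Theory Num.Theory.
Local Open Scope ring_scope.

Definition regular (R : comPzRingType) (x : R) : Prop :=
  forall y : R, x * y = 0 -> y = 0.

Record ideal (R : comPzRingType) := Ideal {
  idmem :> pred R;
  ideal0 : 0 \in idmem;
  idealB : forall x y, x \in idmem -> y \in idmem -> x - y \in idmem;
  idealM : forall r x, x \in idmem -> r * x \in idmem }.

Definition regular_ideal (R : comPzRingType) (I : R -> Prop) : Prop :=
  exists x, I x /\ regular x.

Definition fg_ideal (R : comPzRingType) (n : nat) (g : 'I_n -> R) : R -> Prop :=
  fun x => exists c : 'I_n -> R, x = \sum_(i < n) c i * g i.

(* Invertibility of an ideal I of R: I * J = R for some fractional ideal J,
   i.e. 1 = sum_i a_i * y_i with a_i in I and y_i in the total quotient ring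
   T(R) with y_i * I contained in R.  Writing the finitely many y_i over a
   common regular denominator s (y_i = u_i / s) this unfolds to: *)
Definition invertible (R : comPzRingType) (I : R -> Prop) : Prop :=
  exists (s : R) (m : nat) (a u : 'I_m -> R),
    [/\ regular s,
        forall i, I (a i),
        forall i x, I x -> exists r, u i * x = s * r
      & \sum_(i < m) a i * u i = s].

Definition prufer (R : comPzRingType) : Prop :=
  forall (n : nat) (g : 'I_n -> R),
    regular_ideal (fg_ideal g) -> invertible (fg_ideal g).

Section Amalgamation.
Variables (A B : comPzRingType) (f : {rmorphism A -> B}) (I : ideal B).

Definition amalg_set (x : A * B) : Prop :=
  exists a : A, exists b : B, b \in idmem I /\ x = (a, f a + b).

Definition amalg_pred : pred (A * B) := [pred x | x.2 - f x.1 \in idmem I].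

Lemma amalg_predE x : amalg_set x <-> x \in amalg_pred.
Proof.
case: x => x1 x2; rewrite /amalg_set inE /=; split.
  case=> a [b [Ib [-> ->]]] /=.
  by have -> : f a + b - f a = b by ring.
move=> H; exists x1, (x2 - f x1); split => //.
by have -> : f x1 + (x2 - f x1) = x2 by ring.
Qed.

Fact amalg_subring_closed : subring_closed amalg_pred.
Proof.
have IN x : x \in idmem I -> - x \in idmem I.
  by move=> Hx; rewrite -sub0r; apply: idealB => //; exact: ideal0.
have ID x y : x \in idmem I -> y \in idmem I -> x + y \in idmem I.
  by move=> Hx Hy; rewrite -[y]opprK; apply: idealB => //; exact: IN.
split.
- by rewrite inE /= rmorph1 subrr ideal0.
- move=> x y; rewrite !inE /= => Hx Hy.
  have -> : x.2 - y.2 - f (x.1 - y.1) = (x.2 - f x.1) - (y.2 - f y.1).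
    by rewrite rmorphB; ring.
  exact: idealB.
- move=> x y; rewrite !inE /= => Hx Hy.
  have -> : x.2 * y.2 - f (x.1 * y.1) = y.2 * (x.2 - f x.1) + f x.1 * (y.2 - f y.1).
    by rewrite rmorphM; ring.
  by apply: ID; apply: idealM.
Qed.

Record amalg := Amalg { amval :> A * B; _ : amval \in amalg_pred }.
HB.instance Definition _ := [isSub for amval].
HB.instance Definition _ := [Choice of amalg by <:].
HB.instance Definition _ := GRing.SubChoice_isSubComPzRing.Build (A * B)%type
  amalg_pred amalg amalg_subring_closed.
End Amalgamation.

(* If b = B the amalgamation is just A x B, and a product is Pruefer exactly when
   both factors are; the inverse of an ideal of A x B is assembled from inverses of
   its two projections, and conversely projects onto them.  The real content is
   that Pruefer forces b = B.  Take a regular a0 with f a0 in b and a regular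
   b0 in b; then d = (a0, b0) is regular, p = (a0, 0) lies in the amalgamation and
   p (d - p) = 0.  For such a pair an invertible ideal (d, p) always has d | p, so
   p = d t, whence t = (1, 0) and -1 = t_2 - f t_1 lies in b. *)

From HB Require Import structures.
From mathcomp Require Import all_boot all_order all_algebra.
From mathcomp Require Import ring.
Set Implicit Arguments. Unset Strict Implicit. Unset Printing Implicit Defensive.
Import GRing.Theory.
Local Open Scope ring_scope.

Lemma regular0_invertible (R : comPzRingType) (J : R -> Prop) :
  regular (0 : R) -> invertible J.
Proof.
move=> reg0; exists 0, 0%N, (fun _ => 0), (fun _ => 0).
split=> //; [by case | by case | by rewrite big_ord0].
Qed.

Lemma fg_ideal0 (R : comPzRingType) (g : 'I_0 -> R) x : fg_ideal g x -> x = 0.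
Proof. by case=> c ->; rewrite big_ord0. Qed.

Lemma fg_ideal_rmorph (R S : comPzRingType) (phi : {rmorphism R -> S}) n
    (g : 'I_n -> R) x :
  fg_ideal g x -> fg_ideal (fun i => phi (g i)) (phi x).
Proof.
case=> c ->; exists (fun i => phi (c i)).
by rewrite rmorph_sum; apply: eq_bigr => i _; rewrite rmorphM.
Qed.

Lemma regular1 (R : comPzRingType) : regular (1 : R).
Proof. by move=> y; rewrite mul1r. Qed.

Lemma fg_ideal_gen (R : comPzRingType) n (g : 'I_n -> R) i : fg_ideal g (g i).
Proof.
exists (fun j => (j == i)%:R); rewrite (bigD1 i) //= eqxx mul1r big1 ?addr0 //.
by move=> j /negPf ->; rewrite mul0r.
Qed.

Lemma regular_rmorph_inj (R S : comPzRingType) (phi : {rmorphism R -> S}) x :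
  injective phi -> regular (phi x) -> regular x.
Proof.
move=> phi_inj reg y xy0; apply: phi_inj; rewrite rmorph0; apply: reg.
by rewrite -rmorphM xy0 rmorph0.
Qed.

Lemma fg_ideal2P (R : comPzRingType) (x y z : R) :
  fg_ideal (tnth [tuple x; y]) z <-> exists c0 c1, z = c0 * x + c1 * y.
Proof.
split=> [[c ->]|[c0 [c1 ->]]].
  exists (c ord0), (c (lift ord0 ord0)).
  by rewrite !big_ord_recl big_ord0 addr0 !(tnth_nth 0).
exists (tnth [tuple c0; c1]).
by rewrite !big_ord_recl big_ord0 addr0 !(tnth_nth 0).
Qed.

Lemma invertible_fg2_dvd (R : comPzRingType) (d p : R) :
  p * (d - p) = 0 -> invertible (fg_ideal (tnth [tuple d; p])) ->
  exists t, p = d * t.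
Proof.
move=> pdp [s [m [a [u [regs aJ uJ sum_au]]]]].
(* p a_k = (c0 + c1) p d for a_k = c0 d + c1 p, and (c0 + c1) p lies in the ideal. *)
have pd : p * d = p * p by apply/eqP; rewrite -subr_eq0 -mulrBr pdp.
have pau k : exists r, p * a k * u k = d * (s * r).
  have [c0 [c1 ak]] := (fg_ideal2P _ _ _).1 (aJ k).
  have [r ur] : exists r, u k * ((c0 + c1) * p) = s * r.
    by apply: uJ; apply/fg_ideal2P; exists 0, (c0 + c1); rewrite mul0r add0r.
  exists r; rewrite -ur ak.
  have -> : p * (c0 * d + c1 * p) = c0 * (p * d) + c1 * (p * p) by ring.
  rewrite -pd; ring.
have [r pauE] := fin_all_exists pau.
have sp : s * p = s * (d * \sum_k r k).
  rewrite -{1}sum_au mulr_suml (eq_bigr (fun k => s * (d * r k))) => [|k _].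
    by rewrite -!mulr_sumr.
  by rewrite mulrCA -pauE; ring.
exists (\sum_k r k); apply/eqP; rewrite -subr_eq0; apply/eqP; apply: regs.
by rewrite mulrBr sp subrr.
Qed.

Section RingIsomorphism.
Variables (R S : comPzRingType) (phi : {rmorphism R -> S}) (psi : S -> R).
Hypotheses (phiK : cancel phi psi) (psiK : cancel psi phi).

Lemma regular_iso x : regular x -> regular (phi x).
Proof.
move=> reg y xy0; rewrite -[y]psiK (reg (psi y)) ?rmorph0 //.
by apply: (can_inj phiK); rewrite rmorphM psiK xy0 rmorph0.
Qed.

Lemma fg_ideal_iso n (g : 'I_n -> S) y :
  fg_ideal g y -> fg_ideal (fun i => psi (g i)) (psi y).
Proof.
case=> c ->; exists (fun i => psi (c i)); apply: (can_inj phiK).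
rewrite psiK rmorph_sum; apply: eq_bigr => i _; by rewrite rmorphM !psiK.
Qed.

Lemma prufer_iso : prufer R -> prufer S.
Proof.
move=> prR n g [x [gx regx]].
have regJ : regular_ideal (fg_ideal (fun i => psi (g i))).
  exists (psi x); split; first exact: fg_ideal_iso.
  by apply: (@regular_rmorph_inj _ _ phi _ (can_inj phiK)); rewrite psiK.
have [s [m [a [u [regs aJ uJ sum_au]]]]] := prR _ _ regJ.
exists (phi s), m, (fun k => phi (a k)), (fun k => phi (u k)); split.
- exact: regular_iso.
- move=> k; have [c ->] := fg_ideal_rmorph phi (aJ k).
  by exists c; apply: eq_bigr => i _; rewrite psiK.
- move=> k y /fg_ideal_iso /(uJ k) [r ur].
  by exists (phi r); rewrite -rmorphM -ur rmorphM psiK.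
- by rewrite -sum_au rmorph_sum; apply: eq_bigr => k _; rewrite rmorphM.
Qed.

End RingIsomorphism.

Section Product.
Variables A B : comPzRingType.

Lemma regular_pair (x : A * B) : regular x.1 -> regular x.2 -> regular x.
Proof.
case: x => x1 x2 /= reg1 reg2 [y1 y2] /= [/reg1 -> /reg2 ->] //.
Qed.

Lemma regular_fst (x : A * B) : regular x -> regular x.1.
Proof.
by move=> reg y xy0; have /(congr1 fst) := reg (y, 0) (congr2 pair xy0 (mulr0 _)).
Qed.

Lemma regular_snd (x : A * B) : regular x -> regular x.2.
Proof.
by move=> reg y xy0; have /(congr1 snd) := reg (0, y) (congr2 pair (mulr0 _) xy0).
Qed.

Lemma fg_ideal_pair n (g : 'I_n -> A) (h : 'I_n -> B) x y :
  fg_ideal g x -> fg_ideal h y -> fg_ideal (fun i => (g i, h i)) (x, y).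
Proof.
case=> c -> [d ->]; exists (fun i => (c i, d i)).
by rewrite [RHS]surjective_pairing (rmorph_sum fst) (rmorph_sum snd).
Qed.

Lemma fg_ideal_fst0 n (g : 'I_n -> A * B) y :
  fg_ideal (fun i => (g i).1) y -> fg_ideal g (y, 0).
Proof.
case=> c ->; exists (fun i => (c i, 0)).
rewrite [RHS]surjective_pairing (rmorph_sum fst) (rmorph_sum snd) /=.
by congr pair; rewrite big1 // => i _; rewrite mul0r.
Qed.

Lemma fg_ideal_snd0 n (g : 'I_n -> A * B) y :
  fg_ideal (fun i => (g i).2) y -> fg_ideal g (0, y).
Proof.
case=> c ->; exists (fun i => (0, c i)).
rewrite [RHS]surjective_pairing (rmorph_sum fst) (rmorph_sum snd) /=.
by congr pair; rewrite big1 // => i _; rewrite mul0r.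
Qed.

Lemma invertible_fst (I : A -> Prop) (J : A * B -> Prop) :
  (forall z, J z -> I z.1) -> (forall y, I y -> J (y, 0)) ->
  invertible J -> invertible I.
Proof.
move=> JI IJ [s [m [a [u [regs aJ uJ sum_au]]]]].
exists s.1, m, (fun k => (a k).1), (fun k => (u k).1); split.
- exact: regular_fst.
- by move=> k; apply: JI.
- by move=> k y /IJ /(uJ k) [r /(congr1 fst) ur]; exists r.1.
- by rewrite -sum_au (rmorph_sum fst).
Qed.

Lemma invertible_pair (I1 : A -> Prop) (I2 : B -> Prop) (J : A * B -> Prop) :
  (forall z, J z -> I1 z.1 /\ I2 z.2) ->
  (forall y, I1 y -> J (y, 0)) -> (forall y, I2 y -> J (0, y)) ->
  invertible I1 -> invertible I2 -> invertible J.
Proof.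
move=> JI I1J I2J [s1 [m1 [a1 [u1 [regs1 aJ1 uJ1 sum_au1]]]]].
move=> [s2 [m2 [a2 [u2 [regs2 aJ2 uJ2 sum_au2]]]]].
pose a k := match split k with inl i => (a1 i, 0) | inr j => (0, a2 j) end.
pose u k := match split k with inl i => (u1 i, 0) | inr j => (0, u2 j) end.
exists (s1, s2), (m1 + m2)%N, a, u; split.
- exact: regular_pair.
- by move=> k; rewrite /a; case: (split k) => [i|j]; [apply: I1J | apply: I2J].
- move=> k z /JI [/uJ1 uz1 /uJ2 uz2]; rewrite /u; case: (split k) => [i|j].
    have [r ur] := uz1 i; exists (r, 0).
    by apply: (congr2 pair) => /=; rewrite ?ur ?mulr0 ?mul0r.
  have [r ur] := uz2 j; exists (0, r).
  by apply: (congr2 pair) => /=; rewrite ?ur ?mulr0 ?mul0r.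
- have splitl i : split (lshift m2 i) = inl i := unsplitK (inl i).
  have splitr j : split (rshift m1 j) = inr j := unsplitK (inr j).
  rewrite big_split_ord (eq_bigr (fun i => (a1 i * u1 i, 0))); last first.
    by move=> i _; rewrite /a /u splitl; apply: (congr2 pair); rewrite /= ?mul0r.
  rewrite (eq_bigr (fun j => (0, a2 j * u2 j))); last first.
    by move=> j _; rewrite /a /u splitr; apply: (congr2 pair); rewrite /= ?mul0r.
  rewrite [LHS]surjective_pairing /= !(rmorph_sum fst) !(rmorph_sum snd) /=.
  by rewrite !big1_eq addr0 add0r sum_au1 sum_au2.
Qed.

Lemma prufer_fst : prufer (A * B)%type -> prufer A.
Proof.
move=> prAB [|n] g [x [gx regx]].
  by apply: regular0_invertible; rewrite -(fg_ideal0 gx).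
pose G i := (g i, 1 : B).
apply: (@invertible_fst _ (fg_ideal G)).
- by move=> z /(fg_ideal_rmorph fst).
- exact: (@fg_ideal_fst0 _ G).
apply: prAB; exists (x, 1); split.
  exact: fg_ideal_pair gx (fg_ideal_gen (fun _ => 1) ord0).
by apply: regular_pair => //; apply: regular1.
Qed.

Lemma prufer_pair : prufer A -> prufer B -> prufer (A * B)%type.
Proof.
move=> prA prB n g [x [gx regx]].
apply: (@invertible_pair (fg_ideal (fun i => (g i).1))
                          (fg_ideal (fun i => (g i).2))).
- by move=> z gz; split; [exact: (fg_ideal_rmorph fst) | exact: (fg_ideal_rmorph snd)].
- exact: fg_ideal_fst0.
- exact: fg_ideal_snd0.
- apply: prA; exists x.1; split; last exact: regular_fst.
  exact: (fg_ideal_rmorph fst).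
- apply: prB; exists x.2; split; last exact: regular_snd.
  exact: (fg_ideal_rmorph snd).
Qed.

Definition swap_pair (p : A * B) : B * A := (p.2, p.1).

HB.instance Definition _ := GRing.isNmodMorphism.Build (A * B)%type (B * A)%type
  swap_pair (erefl, fun _ _ => erefl).
HB.instance Definition _ := GRing.isMonoidMorphism.Build (A * B)%type (B * A)%type
  swap_pair (erefl, fun _ _ => erefl).

End Product.

Lemma swap_pairK (A B : comPzRingType) : cancel (@swap_pair A B) (@swap_pair B A).
Proof. by case. Qed.

Lemma prufer_snd (A B : comPzRingType) : prufer (A * B)%type -> prufer B.
Proof.
move=> prAB; apply: (@prufer_fst B A).
exact: (prufer_iso (@swap_pairK A B) (@swap_pairK B A)).
Qed.

Section FullAmalgamation.
Variables (A B : comPzRingType) (f : {rmorphism A -> B}) (I : ideal B).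
Hypothesis I_full : forall b, b \in idmem I.

Fact amalg_pred_full p : p \in amalg_pred f I.
Proof. by rewrite inE I_full. Qed.

Definition amalg_of_pair p : amalg f I := Amalg (amalg_pred_full p).

Lemma amalg_of_pairK : cancel amalg_of_pair val.
Proof. by []. Qed.

Lemma val_amalgK : cancel val amalg_of_pair.
Proof. by move=> x; apply: val_inj. Qed.

HB.instance Definition _ := GRing.isNmodMorphism.Build _ _ amalg_of_pair
  (can2_nmod_morphism val_amalgK amalg_of_pairK).
HB.instance Definition _ := GRing.isMonoidMorphism.Build _ _ amalg_of_pair
  (can2_monoid_morphism val_amalgK amalg_of_pairK).

Lemma prufer_amalg_full : prufer (amalg f I) <-> prufer (A * B)%type.
Proof.
split; first exact: prufer_iso val_amalgK amalg_of_pairK.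
exact: prufer_iso amalg_of_pairK val_amalgK.
Qed.

End FullAmalgamation.

Lemma prufer_amalg_ideal_full (A B : comPzRingType) (f : {rmorphism A -> B})
    (I : ideal B) :
  regular_ideal (fun a : A => f a \in idmem I) ->
  regular_ideal (fun b : B => b \in idmem I) ->
  prufer (amalg f I) -> forall b : B, b \in idmem I.
Proof.
move=> [a0 [fa0I rega0]] [b0 [b0I regb0]] prR.
have dP : (a0, b0) \in amalg_pred f I by rewrite inE idealB.
have pP : (a0, 0) \in amalg_pred f I by rewrite inE idealB ?ideal0.
pose d := Amalg dP; pose p := Amalg pP.
have regd : regular d.
  by apply: (regular_rmorph_inj (phi := val) val_inj); apply: regular_pair.
have pdp : p * (d - p) = 0.
  by apply: val_inj; apply: (congr2 pair); rewrite /= ?subrr ?mulr0 ?mul0r.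
have [t pdt] := invertible_fg2_dvd pdp
  (prR _ _ (ex_intro _ d (conj (fg_ideal_gen _ ord0) regd))).
have t1 : (val t).1 = 1.
  apply/eqP; rewrite eq_sym -subr_eq0; apply/eqP; apply: rega0.
  by rewrite mulrBr mulr1 [X in X - _](congr1 (fun z => (val z).1) pdt) subrr.
have t2 : (val t).2 = 0.
  by apply: regb0; exact: (esym (congr1 (fun z => (val z).2) pdt)).
have := valP t; rewrite inE t1 t2 rmorph1 sub0r => N1I b.
by rewrite -[b]mulr1 -mulrNN; apply: idealM.
Qed.

Theorem theorem3p1 (A B : comPzRingType) (f : {rmorphism A -> B}) (I : ideal B) :
  regular_ideal (fun a : A => f a \in idmem I) ->
  regular_ideal (fun b : B => b \in idmem I) ->
  (prufer (amalg f I) <-> [/\ prufer A, prufer B & forall b : B, b \in idmem I]).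
Proof.
move=> regfI regI; split=> [prR | [prA prB I_full]].
  have I_full := prufer_amalg_ideal_full regfI regI prR.
  have prAB := (prufer_amalg_full f I_full).1 prR.
  by split; [exact: prufer_fst prAB | exact: prufer_snd prAB |].
by apply/(prufer_amalg_full f I_full); exact: prufer_pair.
Qed.
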